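(* Let $(G,c)$ be a tensor network template. Let $d_{\min}=\min_{e\in E}c_e$, and let $k$ be the minimum cardinality of an edge cut set of $G$. Then $\mathrm{QMF}(G,c)\ge d_{\min}^{\,k}$.
   Context: A tensor network template $(G,c)$ consists of a finite undirected graph $G$ with edge set $E$ whose vertex set is partitioned as $S\sqcup T\sqcup V$. Every element of $S$ (inputs) and every element of $T$ (outputs) is an open end of degree $1$; the elements of $V$ are called vertices. For $u\in S\sqcup T$, $e(u)$ denotes the edge incident to $u$. A capacity function $c:E\to\mathbb{Z}_{>0}$ is given, and to each edge $e$ one associates $\mathbb{C}^{c_e}$ with a fixed basis. At each vertex $v$ of degree $d_v$ an ordering $e(v,1),\dots,e(v,d_v)$ of the incident edge-ends is fixed. A tensor assignment $\mathcal T=(\mathcal T_v)_{v\in V}$ chooses $\mathcal T_v\in\bigotimes_{i=1}^{d_v}\mathbb{C}^{c_{e(v,i)}}$ for each $v$. Let $V_S=\bigotimes_{u\in S}\mathbb{C}^{c_{e(u)}}$ and $V_T=\bigotimes_{u\in T}\mathbb{C}^{c_{e(u)}}$. Contracting the network along all edges gives $\beta(G,c;\mathcal T)\in\mathrm{Hom}(V_S,V_T)$, whose matrix entries are $\langle I_T|\beta|I_S\rangle=\sum_W\prod_{v\in V}(\mathcal T_v)_{W|_v}$. Here $W$ ranges over all assignments of basis indices to all edges that agree with $I_S$ on the input edges and with $I_T$ on the output edges, and $W|_v$ is the tuple of indices on $e(v,1),\dots,e(v,d_v)$. The quantum max-flow is $\mathrm{QMF}(G,c)=\max_{\mathcal T}\operatorname{rank}\beta(G,c;\mathcal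 T)$. An edge cut set is a set $C\subseteq E$ for which there is a partition $S\sqcup T\sqcup V=\bar S\sqcup\bar T$ with $S\subseteq\bar S$, $T\subseteq\bar T$, and $C$ equal to the set of edges having one endpoint in $\bar S$ and the other in $\bar T$. *)

From HB Require Import structures.
From mathcomp Require Import all_boot all_order all_algebra.
From Stdlib Require Import ClassicalEpsilon.
Set Implicit Arguments. Unset Strict Implicit. Unset Printing Implicit Defensive.
Import Order.TTheory GRing.Theory Num.Theory.

(* A tensor network template is given by:
   - Nd : finType of all nodes (inputs, outputs and vertices), E : finType of edges;
   - ends e : the (unordered) pair of endpoints of the edge e;
   - S (inputs), T (outputs) : {set Nd}; the vertices are V := ~: (S :|: T);
   - c : E -> nat the capacity;
   - ord v : seq E, the ordering e(v,1),...,e(v,d_v) of the edge-ends at a vertex v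
     (a loop at v appears twice);
   - eo u : the edge e(u) incident to an open end u. *)

Section Template.
Variables (Nd E : finType) (ends : E -> Nd * Nd).

Definition nends (e : E) (x : Nd) : nat := ((ends e).1 == x) + ((ends e).2 == x).
Definition degree (x : Nd) : nat := \sum_(e : E) nends e x.
Definition verts (S T : {set Nd}) : {set Nd} := ~: (S :|: T).

Definition is_template (S T : {set Nd}) (c : E -> nat) (ord : Nd -> seq E)
  (eo : Nd -> E) : Prop :=
  [/\ [disjoint S & T],
      (forall e, 0 < c e)%N,
      (forall u, u \in S :|: T -> degree u = 1%N /\ (0 < nends (eo u) u)%N) &
      (forall v, v \in verts S T -> forall e, count_mem e (ord v) = nends e v)].

Definition crossing (Sb : {set Nd}) : {set E} :=
  [set e | ((ends e).1 \in Sb) != ((ends e).2 \in Sb)].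

Definition is_edge_cut (S T : {set Nd}) (C : {set E}) : Prop :=
  exists Sb : {set Nd}, [/\ S \subset Sb, T \subset ~: Sb & C = crossing Sb].

Definition is_min_cut_size (S T : {set Nd}) (k : nat) : Prop :=
  (exists C, is_edge_cut S T C /\ #|C| = k) /\
  (forall C, is_edge_cut S T C -> (k <= #|C|)%N).

Definition is_min_capacity (c : E -> nat) (d : nat) : Prop :=
  (exists e, c e = d) /\ (forall e, (d <= c e)%N).

Variables (c : E -> nat) (ord : Nd -> seq E) (eo : Nd -> E).

(* multi-indices of the tensor at v: one basis index for each edge-end e(v,i) *)
Definition vidx (v : Nd) : finType :=
  {dffun forall i : 'I_(size (ord v)), 'I_(c (tnth (in_tuple (ord v)) i))}.

Definition eidx : finType := {dffun forall e : E, 'I_(c e)}.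

(* basis multi-indices of V_A for A = S or A = T *)
Definition oidx (A : {set Nd}) : finType :=
  {dffun forall u : {x : Nd | x \in A}, 'I_(c (eo (val u)))}.

Definition restr (W : eidx) (v : Nd) : vidx v :=
  [ffun i => W (tnth (in_tuple (ord v)) i)].

Definition agree (A : {set Nd}) (W : eidx) (I : oidx A) : bool :=
  [forall u, W (eo (val u)) == I u].

Variable (C : numClosedFieldType).

(* a tensor assignment: a tensor in ⊗_i C^{c_{e(v,i)}} for each node
   (only the components at vertices v ∈ V are used) *)
Definition assignment := forall v : Nd, {ffun vidx v -> C}.

(* the matrix of beta(G,c;Tv) : V_S -> V_T, rows indexed by I_T, columns by I_S *)
Definition beta (S T : {set Nd}) (Tv : assignment) :
  'M[C]_(#|{: oidx T}|, #|{: oidx S}|) :=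
  \matrix_(i, j)
    (\sum_(W : eidx | agree W (enum_val i : oidx T) && agree W (enum_val j : oidx S))
      (\prod_(v in verts S T) Tv v (restr W v))%R)%R.

(* quantum max-flow: the maximum rank of beta over all tensor assignments
   (ranks are bounded by the number of rows) *)
Definition decide (P : Prop) : bool :=
  if excluded_middle_informative P then true else false.

Definition QMF (S T : {set Nd}) : nat :=
  \max_(r < #|{: oidx T}|.+1 | decide (exists Tv : assignment, \rank (beta S T Tv) = r)) r.

End Template.

(* By integral max-flow/min-cut (augmenting paths) there is a flow with values
   in {-1,0,1} and value k. Pairing, at every vertex, the i-th incoming flow edge
   with the i-th outgoing one splits it into k edge-disjoint paths from inputs to
   outputs. Let each vertex tensor be the indicator of "the index of every
   incoming path edge is copied to its paired outgoing edge". Labelling each path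
   by an index below dmin and reading the labels on its input and output edges
   selects a dmin^k x dmin^k minor of beta which is diagonal with nonzero
   diagonal, so rank beta >= dmin^k. *)

From HB Require Import structures.
From mathcomp Require Import all_boot all_order all_algebra.
From mathcomp Require Import zify ring.
From Stdlib Require Import ClassicalEpsilon.
Set Implicit Arguments. Unset Strict Implicit. Unset Printing Implicit Defensive.
Import Order.TTheory GRing.Theory Num.Theory.

Section UnitFlow.
Variables (Nd E : finType) (ends : E -> Nd * Nd) (S T : {set Nd}).
Hypothesis disjoint_ST : [disjoint S & T].
Local Open Scope ring_scope.

Definition b2z (b : bool) : int := if b then 1 else 0.

(* A positive value of [f e] flows from [(ends e).1] to [(ends e).2]. *)
Definition incidence (e : E) (x : Nd) : int :=
  b2z ((ends e).1 == x) - b2z ((ends e).2 == x).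

Definition outflow (f : E -> int) (x : Nd) : int := \sum_e f e * incidence e x.

Definition is_unit_flow (f : E -> int) : Prop := [/\
  forall e, -1 <= f e <= 1,
  forall v, v \in verts S T -> outflow f v = 0,
  forall s, s \in S -> 0 <= outflow f s &
  forall t, t \in T -> outflow f t <= 0].

Definition flow_value (f : E -> int) : int := \sum_(s in S) outflow f s.

Definition residual (f : E -> int) : rel Nd := fun x y =>
  [exists e, [&& (ends e).1 == x, (ends e).2 == y & f e <= 0]
          || [&& (ends e).2 == x, (ends e).1 == y & 0 <= f e]].

Definition reachable (f : E -> int) : {set Nd} :=
  [set x | [exists s in S, connect (residual f) s x]].

Lemma in_verts v : (v \in verts S T) = (v \notin S) && (v \notin T).
Proof. by rewrite /verts inE in_setU negb_or. Qed.

Lemma sum_b2z_eq (a : Nd) (A : {set Nd}) : \sum_(x in A) b2z (x == a) = b2z (a \in A).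
Proof.
have [aA|naA] := boolP (a \in A); last first.
  by rewrite big1 // => x xA; case: eqP xA => // ->; rewrite (negbTE naA).
rewrite (big_setD1 a aA) /= eqxx big1 ?addr0 // => x /setD1P[/negbTE -> _] //.
Qed.

Lemma sum_b2z_card (X : {set E}) : \sum_e b2z (e \in X) = #|X|%:Z.
Proof.
rewrite (eq_bigr (fun e => if e \in X then 1 else 0)) //.
by rewrite -big_mkcond /= sumr_const natz.
Qed.

Lemma outflow_update (f : E -> int) e0 d x :
  outflow (fun e => if e == e0 then f e + d else f e) x =
  outflow f x + d * incidence e0 x.
Proof.
rewrite /outflow (bigD1 e0) //= eqxx [in RHS](bigD1 e0) //=.
rewrite (eq_bigr (fun e => f e * incidence e x)); last by move=> e /negbTE ->.
ring.
Qed.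

Lemma augment_along_path (f : E -> int) : (forall e, -1 <= f e <= 1) ->
  forall p x, uniq (x :: p) -> path (residual f) x p ->
  exists f' : E -> int, [/\ forall e, -1 <= f' e <= 1,
    forall z, outflow f' z = outflow f z + b2z (z == x) - b2z (z == last x p) &
    forall e, ((ends e).1 \notin x :: p) || ((ends e).2 \notin x :: p) -> f' e = f e].
Proof.
move=> f_bnd; elim=> [|y p IH] x.
  by move=> _ _; exists f; split=> //= z; ring.
rewrite [uniq _]/= => /andP[x_notin uniq_p] /= /andP[/existsP[e0 res_e0] path_p].
have [f1 [f1_bnd f1_out f1_off]] := IH y uniq_p path_p.
have x_notin' : x \notin y :: p by [].
have [d [bnd_d f1e0 inc_e0]] : exists d : int, [/\ -1 <= f1 e0 + d <= 1,
    f1 e0 = f e0 & forall z, d * incidence e0 z = b2z (z == x) - b2z (z == y)].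
  case/orP: res_e0 => /and3P[/eqP end1 /eqP end2 sgn].
    have fe : f1 e0 = f e0 by apply: f1_off; rewrite end1 x_notin'.
    exists 1; split=> //; first by have := f_bnd e0; rewrite fe; lia.
    by move=> z; rewrite /incidence end1 end2 ![_ == z]eq_sym; ring.
  have fe : f1 e0 = f e0 by apply: f1_off; rewrite end1 x_notin' orbT.
  exists (-1); split=> //; first by have := f_bnd e0; rewrite fe; lia.
  by move=> z; rewrite /incidence end1 end2 ![_ == z]eq_sym; ring.
exists (fun e => if e == e0 then f1 e + d else f1 e); split.
- by move=> e; case: eqP => [->|_].
- by move=> z; rewrite outflow_update f1_out inc_e0 /=; ring.
- move=> e off_e; case: eqP => [ee0|_]; last first.
    by apply: f1_off; move: off_e; rewrite !inE => /orP[] /norP[_ ->]; rewrite ?orbT.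
  move: off_e; rewrite ee0.
  by case/orP: res_e0 => /and3P[/eqP -> /eqP -> _]; rewrite !inE !eqxx ?orbT.
Qed.

Lemma augment_unit_flow f t : is_unit_flow f -> t \in T -> t \in reachable f ->
  exists f', is_unit_flow f' /\ flow_value f' = flow_value f + 1.
Proof.
move=> [f_bnd out_V out_S out_T] tT; rewrite inE => /existsP[s /andP[sS]].
move=> /connectP[p0 path_p0 t_last]; move: tT; rewrite {}t_last.
case: (shortenP path_p0) => p path_p uniq_p _ tT.
have [f' [f'_bnd f'_out _]] := augment_along_path f_bnd uniq_p path_p.
set t' := last s p in f'_out tT.
have t'S : t' \notin S by rewrite (disjointFl disjoint_ST tT).
have sT : s \notin T by rewrite (disjointFr disjoint_ST sS).
exists f'; split; first split.
- exact: f'_bnd.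
- move=> v vV; rewrite f'_out out_V //; move: vV; rewrite in_verts => /andP[vS vT].
  have /negbTE -> : v != s by apply: contraNneq vS => ->.
  have /negbTE -> : v != t' by apply: contraNneq vT => ->.
  by rewrite /b2z; ring.
- move=> x xS; rewrite f'_out.
  have /negbTE -> : x != t' by apply: contraNneq t'S => <-.
  by have := out_S x xS; rewrite /b2z; case: (x == s); lia.
- move=> x xT; rewrite f'_out.
  have /negbTE -> : x != s by apply: contraNneq sT => <-.
  by have := out_T x xT; rewrite /b2z; case: (x == t'); lia.
rewrite /flow_value (eq_bigr (fun x => outflow f x + b2z (x == s) - b2z (x == t'))) //.
by rewrite sumrB big_split /= !sum_b2z_eq sS (negbTE t'S) /b2z addr0.
Qed.

Lemma sources_reachable f : S \subset reachable f.
Proof.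
by apply/subsetP=> s sS; rewrite inE; apply/existsP; exists s; rewrite sS connect0.
Qed.

Lemma reachable_cut f : (forall t, t \in T -> t \notin reachable f) ->
  is_edge_cut ends S T (crossing ends (reachable f)).
Proof.
move=> T_unreached; exists (reachable f); split=> //; first exact: sources_reachable.
by apply/subsetP=> t tT; rewrite inE T_unreached.
Qed.

(* No residual edge leaves the reachable set, so every crossing edge carries one
   unit out of it: this is the max-flow min-cut duality. *)
Lemma flow_value_reachable f : is_unit_flow f ->
  (forall t, t \in T -> t \notin reachable f) ->
  flow_value f = #|crossing ends (reachable f)|%:Z.
Proof.
move=> [f_bnd out_V _ _] T_unreached.
have SR := sources_reachable f.
have closedR x y : residual f x y -> x \in reachable f -> y \in reachable f.
  move=> rxy; rewrite !inE => /existsP[s /andP[sS cs]]; apply/existsP; exists s.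
  by rewrite sS (connect_trans cs (connect1 rxy)).
move: (reachable f) SR T_unreached closedR => R SR RT closedR.
have -> : flow_value f = \sum_(x in R) outflow f x.
  rewrite /flow_value [RHS](big_setID S) /= (setIidPr SR) [X in _ + X]big1 ?addr0 //.
  move=> x /setDP[xR xS]; apply: out_V; rewrite in_verts xS /=.
  by apply: contraTN xR => /RT.
rewrite /outflow exchange_big /= -sum_b2z_card; apply: eq_bigr => e _.
rewrite -mulr_sumr /incidence sumrB.
rewrite !(eq_bigr (fun x => b2z (x == _)) (fun x _ => congr1 b2z (eq_sym _ _))).
rewrite !sum_b2z_eq /crossing inE; have := f_bnd e.
have [e1R|e1R] := boolP ((ends e).1 \in R); have [e2R|e2R] := boolP ((ends e).2 \in R).
- by move=> _; ring.
- have : ~~ (f e <= 0).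
    apply: contraNN e2R => le; apply: (closedR _ _ _ e1R).
    by apply/existsP; exists e; rewrite !eqxx le.
  by move=> /= ? ?; lia.
- have : ~~ (0 <= f e).
    apply: contraNN e1R => le; apply: (closedR _ _ _ e2R).
    by apply/existsP; exists e; rewrite !eqxx le orbT.
  by move=> /= ? ?; lia.
- by move=> _; ring.
Qed.

Lemma exists_unit_flow k : (forall C, is_edge_cut ends S T C -> (k <= #|C|)%N) ->
  exists f, is_unit_flow f /\ flow_value f = k%:Z.
Proof.
move=> min_cut.
suff: forall m, (m <= k)%N -> exists f, is_unit_flow f /\ flow_value f = m%:Z by apply.
elim=> [|m IH] lt_mk.
  have out0 x : outflow (fun=> 0) x = 0 by rewrite /outflow big1 // => e _; rewrite mul0r.
  exists (fun=> 0); split; last by rewrite /flow_value big1.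
  by split=> [e|v _|s _|t _]; rewrite ?out0.
have [f [unit_f val_f]] := IH (ltnW lt_mk).
have [/existsP[t /andP[tT tR]] | T_unreached] := boolP [exists t in T, t \in reachable f].
  have [f' [unit_f' val_f']] := augment_unit_flow unit_f tT tR.
  by exists f'; rewrite val_f' val_f -addn1 PoszD.
have {}T_unreached t : t \in T -> t \notin reachable f.
  by move=> tT; apply: contraNN T_unreached => tR; apply/existsP; exists t; rewrite tT.
have := min_cut _ (reachable_cut T_unreached).
by move: (flow_value_reachable unit_f T_unreached); rewrite val_f => -[<-]; lia.
Qed.

End UnitFlow.
Section SuccessorOrbits.
Variables (A : finType) (r : rel A).

Lemma connect_last_step x z : connect r x z -> x != z ->
  exists2 w, connect r x w & r w z.
Proof.
move=> /connectP[p path_p ->]; elim/last_ind: p path_p => [|q y _] /=.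
  by rewrite eqxx.
rewrite rcons_path last_rcons => /andP[path_q q_y] _; exists (last x q) => //.
by apply/connectP; exists q.
Qed.

Lemma connect_no_pred x y : (forall w, ~~ r w y) -> connect r x y -> x = y.
Proof.
move=> no_pred cxy; have [//|nxy] := eqVneq x y.
by have [w _] := connect_last_step cxy nxy; rewrite (negbTE (no_pred w)).
Qed.

Lemma connect_invariant (g : A -> nat) : (forall x y, r x y -> g x = g y) ->
  forall x z, connect r x z -> g z = g x.
Proof.
move=> g_r x z cxz; have closed_g : closed r [pred y | g y == g x].
  by move=> y y' /g_r; rewrite !inE => ->.
by have := closed_connect closed_g cxz; rewrite !inE eqxx => /esym/eqP.
Qed.

End SuccessorOrbits.

Definition succ_rel (A : eqType) (next : A -> option A) : rel A :=
  fun x y => next x == Some y.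

Section InjectiveSuccessor.
Variables (A : finType) (next : A -> option A).
Hypothesis next_inj : forall x y z, next x = Some z -> next y = Some z -> x = y.
Local Notation step := (succ_rel next).

Lemma connect_step_comparable x y z : connect step x z -> connect step y z ->
  connect step x y || connect step y x.
Proof.
move=> /connectP[p path_p ->]; elim/last_ind: p path_p => [|q w IH] /=.
  by move=> _ ->; rewrite orbT.
rewrite rcons_path last_rcons => /andP[path_q q_w] cyw.
have [->|nyw] := eqVneq y w.
  apply/orP; left; apply/connectP.
  by exists (rcons q w); rewrite ?rcons_path ?path_q ?last_rcons.
have [w' cyw' w'_w] := connect_last_step cyw nyw.
have w'E : w' = last x q by apply: (@next_inj _ _ w); apply/eqP.
by apply: IH; rewrite -?w'E.
Qed.

(* Otherwise the injective map would send the finite orbit of [x] onto itself,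
   giving [x] a predecessor. *)
Lemma connect_step_stop x : (forall w, ~~ step w x) ->
  exists z, connect step x z /\ next z = None.
Proof.
move=> no_pred; have [/existsP[z /andP[cz /eqP nz]]|/existsPn no_stop] :=
  boolP [exists z, connect step x z && (next z == None)]; first by exists z.
exfalso; set X := [set z | connect step x z].
pose g z := odflt z (next z).
have g_step : {in X, forall z, step z (g z)}.
  move=> z; rewrite inE => cz; have := no_stop z; rewrite cz /= /g /succ_rel.
  by case: (next z).
have gX : g @: X \subset X.
  apply/subsetP => _ /imsetP[z zX ->]; rewrite inE.
  by rewrite inE in zX; rewrite (connect_trans zX (connect1 (g_step z _))) // inE.
have g_inj : {in X &, injective g}.
  move=> z1 z2 z1X z2X eq_g; apply: (@next_inj _ _ (g z1)); apply/eqP.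
    exact: g_step.
  by rewrite eq_g; apply: g_step.
have /imsetP[z zX xE] : x \in g @: X.
  have -> : g @: X = X by apply/eqP; rewrite eqEcard gX card_in_imset // leqnn.
  by rewrite inE connect0.
by have := g_step z zX; rewrite -xE (negbTE (no_pred z)).
Qed.

End InjectiveSuccessor.
Section FlowPaths.
Variables (Nd E : finType) (ends : E -> Nd * Nd) (S T : {set Nd}) (eo : Nd -> E).
Hypothesis open_ends : forall u, u \in S :|: T ->
  degree ends u = 1%N /\ (0 < nends ends (eo u) u)%N.
Variable f : E -> int.
Hypothesis unit_f : is_unit_flow ends S T f.
Local Open Scope ring_scope.

Lemma open_end_edge u e : u \in S :|: T -> (0 < nends ends e u)%N -> e = eo u.
Proof.
move=> uST e_u; have [deg_u eo_u] := open_ends uST.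
have [//|ne] := eqVneq e (eo u).
by move: deg_u; rewrite /degree (bigD1 (eo u)) //= (bigD1 e) ?ne //=; lia.
Qed.

Lemma nends_open_end u : u \in S :|: T -> nends ends (eo u) u = 1%N.
Proof.
move=> uST; have [deg_u eo_u] := open_ends uST.
by move: deg_u; rewrite /degree (bigD1 (eo u)) //=; lia.
Qed.

Lemma outflow_open_end u : u \in S :|: T ->
  outflow ends f u = f (eo u) * incidence ends (eo u) u.
Proof.
move=> uST; rewrite /outflow (bigD1 (eo u)) //= big1 ?addr0 // => e ne.
have : ~~ (0 < nends ends e u)%N by apply: contra ne => /(open_end_edge uST) ->.
rewrite /incidence /nends.
by case: ((ends e).1 == u); case: ((ends e).2 == u) => //= _; rewrite /b2z subrr mulr0.
Qed.

Lemma unit_flow_values e : f e = -1 \/ f e = 0 \/ f e = 1.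
Proof. by case: unit_f => f_bnd _ _ _; have := f_bnd e; lia. Qed.

Definition flow_head e := if f e == 1 then (ends e).2 else (ends e).1.
Definition flow_tail e := if f e == 1 then (ends e).1 else (ends e).2.
Definition edges_in v := [set e | (f e != 0) && (flow_head e == v)].
Definition edges_out v := [set e | (f e != 0) && (flow_tail e == v)].

Lemma nends_flow_head e : (0 < nends ends e (flow_head e))%N.
Proof. by rewrite /nends /flow_head; case: ifP => _; rewrite eqxx ?addn1. Qed.

Lemma nends_flow_tail e : (0 < nends ends e (flow_tail e))%N.
Proof. by rewrite /nends /flow_tail; case: ifP => _; rewrite eqxx ?addn1. Qed.

Lemma flow_incidence e v :
  f e * incidence ends e v = b2z (e \in edges_out v) - b2z (e \in edges_in v).
Proof.
rewrite !inE /flow_head /flow_tail /incidence.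
by case: (unit_flow_values e) => [->|[->|->]] /=;
  case: ((ends e).1 == v); case: ((ends e).2 == v) => /=; rewrite /b2z; ring.
Qed.

Lemma card_edges_out v : v \in verts S T -> #|edges_out v| = #|edges_in v|.
Proof.
case: unit_f => _ out_V _ _ vV; have := out_V v vV.
rewrite /outflow (eq_bigr _ (fun e _ => flow_incidence e v)) sumrB !sum_b2z_card.
by move=> /eqP; rewrite subr_eq0 eqz_nat => /eqP.
Qed.

(* At an inner vertex the i-th incoming flow edge is paired with the i-th
   outgoing one; following the pairings splits the flow into paths. *)
Definition pair_edge v e := nth e (enum (edges_out v)) (index e (enum (edges_in v))).

Definition next_edge e : option E :=
  if (f e != 0) && (flow_head e \in verts S T) then Some (pair_edge (flow_head e) e)
  else None.

Local Notation next := (succ_rel next_edge).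

Lemma index_edges_in v e : v \in verts S T -> e \in edges_in v ->
  (index e (enum (edges_in v)) < size (enum (edges_out v)))%N.
Proof. by move=> vV e_in; rewrite -cardE card_edges_out // cardE index_mem mem_enum. Qed.

Lemma next_edgeP e e' : next_edge e = Some e' ->
  [/\ f e != 0, flow_head e \in verts S T, e \in edges_in (flow_head e)
    & e' \in edges_out (flow_head e)].
Proof.
rewrite /next_edge; case: ifP => // /andP[fe head_V] [<-].
have e_in : e \in edges_in (flow_head e) by rewrite inE fe eqxx.
by split=> //; rewrite -mem_enum /pair_edge mem_nth // index_edges_in.
Qed.

Lemma next_edge_inj e1 e2 e' : next_edge e1 = Some e' -> next_edge e2 = Some e' -> e1 = e2.
Proof.
move=> next1 next2.
have [f1 V1 in1 out1] := next_edgeP next1; have [f2 V2 in2 out2] := next_edgeP next2.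
have head12 : flow_head e1 = flow_head e2.
  by move: out1 out2; rewrite !inE => /andP[_ /eqP <-] /andP[_ /eqP <-].
move: next1 next2; rewrite /next_edge f1 V1 f2 V2 /= => -[<-] [].
rewrite head12 in in1 *; rewrite /pair_edge (set_nth_default e2) ?index_edges_in //.
move=> /eqP; rewrite nth_uniq ?enum_uniq ?index_edges_in // => /eqP eq_idx.
have e1_in : e1 \in enum (edges_in (flow_head e2)) by rewrite mem_enum.
by rewrite -(nth_index e1 e1_in) -eq_idx nth_index // mem_enum.
Qed.

Lemma connect_next_flow e e' : connect next e e' -> f e != 0 -> f e' != 0.
Proof.
move=> cee' fe; have closed_flow : closed next [pred x | f x != 0].
  move=> x y /eqP /next_edgeP[fx _ _]; rewrite !inE fx.
  by case/andP=> ->.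
by rewrite -[_ != _](closed_connect closed_flow cee').
Qed.

Definition sources := [set s in S | outflow ends f s == 1].

Lemma source_edge s : s \in sources -> f (eo s) != 0 /\ flow_tail (eo s) = s.
Proof.
rewrite inE => /andP[sS /eqP out1].
have sST : s \in S :|: T by rewrite in_setU sS.
rewrite outflow_open_end // in out1; have := nends_open_end sST.
move: out1; rewrite /incidence /nends /flow_tail.
case: ((ends (eo s)).1 =P s) => e1; case: ((ends (eo s)).2 =P s) => e2;
  case: (unit_flow_values (eo s)) => [->|[->|->]] //=; rewrite /b2z; lia.
Qed.

Lemma source_edge_no_pred s : s \in sources -> forall e, ~~ next e (eo s).
Proof.
move=> s_src e; apply/negP => /eqP /next_edgeP[_ head_V _].
rewrite inE => /andP[_ /eqP tail_eo]; have [_ tail_s] := source_edge s_src.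
by move: s_src head_V; rewrite inE -tail_eo tail_s in_verts => /andP[-> _].
Qed.

Lemma stop_edge_sink e : f e != 0 -> next_edge e = None ->
  flow_head e \in T /\ e = eo (flow_head e).
Proof.
move=> fe stop_e.
have head_ST : flow_head e \in S :|: T.
  have : flow_head e \notin verts S T.
    by apply/negP => head_V; move: stop_e; rewrite /next_edge fe head_V.
  by rewrite in_verts negb_and !negbK in_setU.
have e_eo := open_end_edge head_ST (nends_flow_head e).
split=> //; case/setUP: head_ST => // head_S; exfalso.
case: unit_f => _ _ out_S _; have := out_S _ head_S.
rewrite outflow_open_end ?in_setU ?head_S // -e_eo.
have := @nends_open_end (flow_head e); rewrite in_setU head_S -e_eo => /(_ isT).
rewrite /incidence /nends /flow_head; move: fe.
by case: (unit_flow_values e) => [->|[->|->]] //= _; rewrite eqxx /b2z;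
  case: (_ == _) => //=; lia.
Qed.

Lemma connect_next_source_unique s1 s2 e : s1 \in sources -> s2 \in sources ->
  connect next (eo s1) e -> connect next (eo s2) e -> s1 = s2.
Proof.
move=> src1 src2 c1 c2.
have eo12 : eo s1 = eo s2.
  case/orP: (connect_step_comparable next_edge_inj c1 c2) => c12.
    exact: connect_no_pred (source_edge_no_pred src2) c12.
  exact/esym/(connect_no_pred (source_edge_no_pred src1) c12).
by have [_ <-] := source_edge src1; have [_ <-] := source_edge src2; rewrite eo12.
Qed.

Lemma source_path_to_sink s : s \in sources ->
  exists e, [/\ connect next (eo s) e, flow_head e \in T & e = eo (flow_head e)].
Proof.
move=> s_src; have [e [ce stop_e]] :=
  connect_step_stop next_edge_inj (source_edge_no_pred s_src).
have [fs _] := source_edge s_src.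
by have [] := stop_edge_sink (connect_next_flow ce fs) stop_e; exists e.
Qed.

Lemma card_sources k : flow_value ends S f = k%:Z -> #|sources| = k.
Proof.
case: unit_f => _ _ out_S _.
have out_src s : s \in S -> outflow ends f s = b2z (s \in sources).
  move=> sS; rewrite inE sS /=; have := out_S s sS.
  rewrite outflow_open_end ?in_setU ?sS // /incidence /b2z.
  by case: (_ == _); case: (_ == _); case: (unit_flow_values (eo s)) => [->|[->|->]];
    rewrite /= ?eqxx //= => ?; lia.
rewrite /flow_value (eq_bigr _ out_src) big_mkcond /=.
rewrite (eq_bigr (fun s => b2z (s \in sources))); last first.
  by move=> s _; case: ifP => // sS; rewrite inE sS.
by rewrite sum_b2z_card => -[].
Qed.

End FlowPaths.

Lemma mxrank_diag_minor (F : fieldType) m n (I : finType) (B : 'M[F]_(m, n))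
    (row_of : I -> 'I_m) (col_of : I -> 'I_n) :
  (forall i j, (B (row_of i) (col_of j) != 0%R) = (i == j)) -> (#|I| <= \rank B)%N.
Proof.
move=> B_diag; pose elt (k : 'I_#|I|) : I := enum_val k.
pose M := mxsub (row_of \o elt) (col_of \o elt) B.
have rank_M : (\rank M <= \rank B)%N.
  rewrite /M mxsubrc rowsubE -[B in colsub _ B]mulmx1 -mulmx_colsub.
  exact: leq_trans (mxrankM_maxr _ _) (mxrankM_maxl _ _).
have M_diag : M = diag_mx (\row_i M i i).
  apply/matrixP => i j; rewrite !mxE; have [->|ne] := eqVneq i j; first by rewrite mulr1n.
  apply/eqP; rewrite mulr0n -[_ == 0%R]negbK B_diag.
  by apply: contra ne => /eqP/enum_val_inj ->.
suff M_unit : M \in unitmx by rewrite -(mxrank_unit M_unit).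
rewrite M_diag unitmxE det_diag unitfE; apply/prodf_neq0 => i _.
by rewrite !mxE B_diag.
Qed.

Lemma rank_beta_le_QMF (Nd E : finType) (c : E -> nat) (ord : Nd -> seq E)
    (eo : Nd -> E) (C : numClosedFieldType) (S T : {set Nd}) (Tv : assignment c ord C) :
  (\rank (beta eo S T Tv) <= QMF c ord eo C S T)%N.
Proof.
have rank_lt : (\rank (beta eo S T Tv) < #|{: oidx c eo T}|.+1)%N.
  by rewrite ltnS rank_leq_row.
apply: (@leq_bigmax_cond _ _ (fun r : 'I__ => nat_of_ord r) (Ordinal rank_lt)).
by rewrite /decide; case: excluded_middle_informative => // -[]; exists Tv.
Qed.

Section CopyTensor.
Variables (Nd E : finType) (ends : E -> Nd * Nd) (S T : {set Nd}).
Variables (c : E -> nat) (ord : Nd -> seq E) (eo : Nd -> E).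
Hypothesis template : is_template ends S T c ord eo.
Variables (C : numClosedFieldType) (f : E -> int) (d : nat).
Hypothesis unit_f : is_unit_flow ends S T f.
Hypothesis d_le_c : forall e, (d <= c e)%N.
Local Open Scope ring_scope.

Local Notation next := (succ_rel (next_edge ends S T f)).
Local Notation flow_head := (flow_head ends f).
Local Notation sources := (sources ends S f).

Let open_ends : forall u, u \in S :|: T ->
  degree ends u = 1%N /\ (0 < nends ends (eo u) u)%N.
Proof. by case: template. Qed.

Lemma c_gt0 e : (0 < c e)%N. Proof. by case: template. Qed.

Lemma mem_ord v e : v \in verts S T -> (0 < nends ends e v)%N -> e \in ord v.
Proof.
case: template => _ _ _ count_ord vV e_v; apply/negPn/negP => /count_memPn.
by move: e_v; rewrite -count_ord // => /[swap] ->.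
Qed.

Lemma restr_val (W W' : eidx c) v e : restr ord W' v = restr ord W v -> e \in ord v ->
  val (W' e) = val (W e).
Proof.
move=> eq_restr e_ord.
have idx_lt : (index e (ord v) < size (ord v))%N by rewrite index_mem.
move: eq_restr => /ffunP/(_ (Ordinal idx_lt)); rewrite !ffunE => /(congr1 val).
by rewrite (tnth_nth e) /= nth_index.
Qed.

Definition ord_mod e (m : nat) : 'I_(c e) := Ordinal (ltn_pmod m (c_gt0 e)).

Lemma val_ord_mod e m : (m < d)%N -> val (ord_mod e m) = m.
Proof. by move=> lt_md; rewrite /= modn_small // (leq_trans lt_md (d_le_c e)). Qed.

Definition copies_at v (W : eidx c) : bool :=
  [forall e, forall e', ((flow_head e == v) && next e e') ==> (val (W e) == val (W e'))].

Definition copy_tensor : assignment c ord C := fun v =>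
  [ffun y => if [exists W : eidx c, (restr ord W v == y) && copies_at v W] then 1 else 0].

Lemma copies_at_restr (W W' : eidx c) v : v \in verts S T ->
  restr ord W' v = restr ord W v -> copies_at v W' = copies_at v W.
Proof.
move=> vV eq_restr; apply: eq_forallb => e; apply: eq_forallb => e'.
have [/andP[/eqP head_e next_e]|] //= := boolP ((flow_head e == v) && next e e').
have [_ _ _] := next_edgeP unit_f (eqP next_e); rewrite inE head_e => /andP[_ /eqP tail_e'].
have e_ord : e \in ord v by apply: mem_ord vV _; rewrite -head_e nends_flow_head.
have e'_ord : e' \in ord v by apply: mem_ord vV _; rewrite -tail_e' nends_flow_tail.
by rewrite (restr_val eq_restr e_ord) (restr_val eq_restr e'_ord).
Qed.

Lemma copy_tensor_restr (W : eidx c) v : v \in verts S T ->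
  copy_tensor v (restr ord W v) = if copies_at v W then 1 else 0.
Proof.
move=> vV; rewrite /copy_tensor ffunE; have [copies|not_copies] := boolP (copies_at v W).
  by rewrite (_ : [exists _, _] = true) //; apply/existsP; exists W; rewrite eqxx copies.
case: existsP => // -[W' /andP[/eqP eq_restr copies']].
by rewrite (copies_at_restr vV eq_restr) (negbTE not_copies) in copies'.
Qed.

Definition along_paths (W : eidx c) : bool := [forall v in verts S T, copies_at v W].

Lemma along_pathsP (W : eidx c) :
  reflect (forall e e', next e e' -> val (W e) = val (W e')) (along_paths W).
Proof.
apply: (iffP forall_inP) => [copies e e' next_e | const_W v _].
  have [_ head_V _ _] := next_edgeP unit_f (eqP next_e).
  by have /forallP/(_ e)/forallP/(_ e') := copies _ head_V; rewrite eqxx next_e => /eqP.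
by apply/forallP => e; apply/forallP => e'; apply/implyP => /andP[_ /const_W ->].
Qed.

Lemma prod_copy_tensor (W : eidx c) :
  \prod_(v in verts S T) copy_tensor v (restr ord W v) = if along_paths W then 1 else 0.
Proof.
rewrite (eq_bigr (fun v => if copies_at v W then 1 else 0)); last first.
  by move=> v vV; rewrite copy_tensor_restr.
have [/forall_inP copies|/forall_inPn[v vV not_copies]] := boolP (along_paths W).
  by rewrite big1 // => v vV; rewrite copies.
by rewrite (bigD1 v) //= (negbTE not_copies) mul0r.
Qed.

Lemma beta_copy_tensor_neq0 i j : (beta eo S T copy_tensor i j != 0) =
  [exists W : eidx c, [&& agree W (enum_val i : oidx c eo T),
                          agree W (enum_val j : oidx c eo S) & along_paths W]].
Proof.
rewrite /beta mxE (eq_bigr _ (fun W _ => prod_copy_tensor W)) -big_mkcondr /=.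
rewrite sumr_const pnatr_eq0 -lt0n.
by apply/card_gt0P/existsP => -[W W_ok]; exists W; move: W_ok; rewrite unfold_in /= andbA.
Qed.

Local Notation source := {s : Nd | s \in sources}.

(* Each flow path carries the label its source receives; edges on no path get 0. *)
Definition label_edges (a : {ffun source -> 'I_d}) : eidx c :=
  [ffun e => if [pick s : source | connect next (eo (val s)) e] is Some s
             then ord_mod e (a s) else ord_mod e 0].

Lemma label_edges_on_path a (s : source) e : connect next (eo (val s)) e ->
  val (label_edges a e) = a s.
Proof.
move=> cse; rewrite ffunE; case: pickP => [s' cs'e|/(_ s)]; last by rewrite cse.
have -> // : s' = s.
  exact/val_inj/(connect_next_source_unique open_ends unit_f (valP s') (valP s) cs'e cse).
by rewrite val_ord_mod.
Qed.

Lemma label_edges_off_paths a e : (forall s : source, ~~ connect next (eo (val s)) e) ->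
  val (label_edges a e) = 0%N.
Proof.
move=> off_e; rewrite ffunE; case: pickP => [s cse|_].
  by move: (off_e s); rewrite cse.
by rewrite /= mod0n.
Qed.

Lemma label_edges_next a e e' : next e e' -> val (label_edges a e) = val (label_edges a e').
Proof.
move=> next_e.
have [/existsP[s cse]|/existsPn off_e] :=
  boolP [exists s : source, connect next (eo (val s)) e].
  have cse' := connect_trans cse (connect1 next_e).
  by rewrite (label_edges_on_path a cse) (label_edges_on_path a cse').
rewrite (label_edges_off_paths a off_e) label_edges_off_paths // => s; apply/negP => cse'.
have ne : eo (val s) != e'.
  apply: contraTneq next_e => <-.
  exact: (source_edge_no_pred open_ends unit_f (valP s) e).
have [w csw next_w] := connect_last_step cse' ne.
have e_w : e = w by apply: (next_edge_inj unit_f (eqP next_e) (eqP next_w)).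
by move: (off_e s); rewrite e_w csw.
Qed.

Definition out_label a : oidx c eo T := [ffun u => label_edges a (eo (val u))].
Definition in_label a : oidx c eo S := [ffun u => label_edges a (eo (val u))].

(* Along each path the index is constant, so a nonzero term of the entry
   (out_label a, in_label b) reads the label of each source at its sink. *)
Lemma beta_copy_tensor_labels a b :
  (beta eo S T copy_tensor (enum_rank (out_label a)) (enum_rank (in_label b)) != 0)
  = (a == b).
Proof.
rewrite beta_copy_tensor_neq0 !enum_rankK.
apply/existsP/eqP => [[W /and3P[W_out W_in /along_pathsP W_paths]] | <-]; last first.
  exists (label_edges a); apply/and3P; split.
  - by apply/forallP => u; apply/eqP; rewrite [RHS]ffunE.
  - by apply/forallP => u; apply/eqP; rewrite [RHS]ffunE.
  - by apply/along_pathsP => e e'; apply: label_edges_next.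
apply/ffunP => s; apply: val_inj.
have [e [cse head_T e_eo]] := source_path_to_sink open_ends unit_f (valP s).
have sS : val s \in S by move: (valP s); rewrite inE => /andP[].
move/forallP: W_in => /(_ (exist _ (val s) sS)) /eqP /(congr1 val).
rewrite ffunE /= (label_edges_on_path b (connect0 _ _)) => W_s.
move/forallP: W_out => /(_ (exist _ (flow_head e) head_T)) /eqP /(congr1 val).
rewrite ffunE /= -e_eo (label_edges_on_path a cse) => W_e.
by rewrite -W_s -W_e (connect_invariant W_paths cse).
Qed.

Lemma rank_beta_copy_tensor : (d ^ #|sources| <= \rank (beta eo S T copy_tensor))%N.
Proof.
have <- : #|{: {ffun source -> 'I_d}}| = (d ^ #|sources|)%N.
  by rewrite card_ffun card_ord card_sig.
exact: (mxrank_diag_minor (B := beta eo S T copy_tensor) beta_copy_tensor_labels).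
Qed.

End CopyTensor.

Theorem proposition3p11 (Nd E : finType) (ends : E -> Nd * Nd)
  (S T : {set Nd}) (c : E -> nat) (ord : Nd -> seq E) (eo : Nd -> E)
  (C : numClosedFieldType) (dmin k : nat) :
  is_template ends S T c ord eo ->
  is_min_capacity c dmin ->
  is_min_cut_size ends S T k ->
  (dmin ^ k <= QMF c ord eo C S T)%N.
Proof.
move=> template [_ dmin_le] [_ min_cut].
have [disjoint_ST _ open_ends _] := template.
have [f [unit_f value_f]] := exists_unit_flow disjoint_ST min_cut.
apply: (leq_trans _ (rank_beta_le_QMF eo S T (copy_tensor ends S T c ord C f))).
rewrite -(card_sources open_ends unit_f value_f).
exact: (rank_beta_copy_tensor template C unit_f dmin_le).
Qed.
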